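(* Let $\langle M,\sqsubseteq\rangle$ be a mereological structure. Then $\langle M,\mathsf{S}_{\sqsubseteq}\rangle$ satisfies the sum axioms (S1)–(S5) (with $\mathsf{S}:=\mathsf{S}_{\sqsubseteq}$), i.e. it is a sum structure.
   Context: A mereological structure is a pair $\langle M,\sqsubseteq\rangle$ where $M$ is a non-empty set and $\sqsubseteq\subseteq M\times M$ satisfies, for all $x,y,z\in M$: (P1) $x\sqsubseteq x$; (P2) $x\sqsubseteq y\wedge y\sqsubseteq x\to x=y$; (P3) $x\sqsubseteq y\wedge y\sqsubseteq z\to x\sqsubseteq z$; (P4) if $x\not\sqsubseteq y$ then there is $z\in M$ with $z\sqsubseteq x$ such that there is no $u\in M$ with $u\sqsubseteq z$ and $u\sqsubseteq y$; (P5) for every non-empty $X\subseteq M$ there is $x\in M$ such that every $y\in X$ satisfies $y\sqsubseteq x$, and for every $a\in M$ with $a\sqsubseteq x$ there exist $y\in X$ and $z\in M$ with $z\sqsubseteq y$ and $z\sqsubseteq a$. Overlap: $x\circ_{\sqsubseteq} y$ iff there is $z\in M$ with $z\sqsubseteq x$ and $z\sqsubseteq y$. The induced sum relation $\mathsf{S}_{\sqsubseteq}\subseteq M\times\mathcal{P}(M)$: $x\,\mathsf{S}_{\sqsubseteq}\,X$ iff every $y\in X$ satisfies $y\sqsubseteq x$, and for every $a\in M$ with $a\sqsubseteq x$ there is $y\in X$ with $a\circ_{\sqsubseteq} y$. For a set $M$ and a relation $\mathsf{S}\subseteq M\times\mathcal{P}(M)$ define: $x\sqsubseteq_{\mathsf{S}}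 y$ iff there is $X\subseteq M$ with $y\,\mathsf{S}\,X$ and $x\in X$; $\mathrm{I}(x)=\{y\in M\mid y\sqsubseteq_{\mathsf{S}} x\}$ and for $A\subseteq M$, $\mathrm{I}(A)=\bigcup_{a\in A}\mathrm{I}(a)$; $x$ s-overlaps $y$ iff there are $X,Y\subseteq M$ with $x\,\mathsf{S}\,X$, $y\,\mathsf{S}\,Y$, $X\cap Y\neq\emptyset$; a set $A\subseteq M$ is pre-dense in $B\subseteq M$ iff for every $b\in B$ there is $a\in A$ such that $a$ s-overlaps $b$. Sum axioms: (S1) for every non-empty $X\subseteq M$ there is $x\in M$ with $x\,\mathsf{S}\,X$; (S2) $x\,\mathsf{S}\,X\wedge y\,\mathsf{S}\,X\to x=y$; (S3) $x\,\mathsf{S}\,X\wedge y\,\mathsf{S}\,Y\wedge x\in Y\to y\,\mathsf{S}\,(X\cup Y)$; (S4) if $x\,\mathsf{S}\,X$, $x\,\mathsf{S}\,Y$ and $y\in Y$, then there are $z\in X$ and $Z,U\subseteq M$ with $z\,\mathsf{S}\,Z$, $y\,\mathsf{S}\,U$ and $Z\cap U\neq\emptyset$; (S5) for all $x\in M$ and $X\subseteq M$: if $X$ is pre-dense in $\mathrm{I}(x)$ then $x\,\mathsf{S}\,(\mathrm{I}(x)\cap\mathrm{I}(X))$. *)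

Set Implicit Arguments.

Section Mereology.
Variable M : Type.

Definition mereological (le : M -> M -> Prop) : Prop :=
  inhabited M /\
  (forall x, le x x) /\
  (forall x y, le x y -> le y x -> x = y) /\
  (forall x y z, le x y -> le y z -> le x z) /\
  (forall x y, ~ le x y ->
     exists z, le z x /\ ~ (exists u, le u z /\ le u y)) /\
  (forall X : M -> Prop, (exists y, X y) ->
     exists x, (forall y, X y -> le y x) /\
       (forall a, le a x -> exists y z, X y /\ le z y /\ le z a)).

Definition overlap (le : M -> M -> Prop) (x y : M) : Prop :=
  exists z, le z x /\ le z y.

Definition sum_of (le : M -> M -> Prop) (x : M) (X : M -> Prop) : Prop :=
  (forall y, X y -> le y x) /\
  (forall a, le a x -> exists y, X y /\ overlap le a y).

Definition sle (S : M -> (M -> Prop) -> Prop) (x y : M) : Prop :=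
  exists X, S y X /\ X x.

Definition Iset (S : M -> (M -> Prop) -> Prop) (x : M) : M -> Prop :=
  fun y => sle S y x.

Definition IsetU (S : M -> (M -> Prop) -> Prop) (A : M -> Prop) : M -> Prop :=
  fun y => exists a, A a /\ sle S y a.

Definition s_overlaps (S : M -> (M -> Prop) -> Prop) (x y : M) : Prop :=
  exists X Y, S x X /\ S y Y /\ exists z, X z /\ Y z.

Definition pre_dense (S : M -> (M -> Prop) -> Prop) (A B : M -> Prop) : Prop :=
  forall b, B b -> exists a, A a /\ s_overlaps S a b.

Definition sum_structure (S : M -> (M -> Prop) -> Prop) : Prop :=
  (forall X : M -> Prop, (exists y, X y) -> exists x, S x X) /\
  (forall x y X, S x X -> S y X -> x = y) /\
  (forall x y X Y, S x X -> S y Y -> Y x ->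
     S y (fun z => X z \/ Y z)) /\
  (forall x y X Y, S x X -> S x Y -> Y y ->
     exists z Z U, X z /\ S z Z /\ S y U /\ exists w, Z w /\ U w) /\
  (forall x X, pre_dense S X (Iset S x) ->
     S x (fun z => Iset S x z /\ IsetU S X z)).

End Mereology.

From Stdlib Require Import Classical.

(* The proof is a direct verification of the five sum axioms for the induced
   sum relation S_le, each isolated as a lemma about a relation le assumed
   to satisfy only those mereological axioms the lemma really needs:
   - the relation sle induced by S_le is le itself, because every y <= x is
     witnessed by the two-element family {x, y} summed by x;
   - s-overlap (sharing a summand) implies overlap;
   - a sum of X lies below every upper bound of X (strong supplementation
     (P4), argued classically); antisymmetry then gives uniqueness (S2);
   - (S1) is fusion (P5); (S3), (S4) and (S5) are verified from the
     definitions using the facts above. *)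

Section InducedSums.

Variable M : Type.
Variable le : M -> M -> Prop.

Hypothesis le_refl : forall x, le x x.
Hypothesis le_antisym : forall x y, le x y -> le y x -> x = y.
Hypothesis le_trans : forall x y z, le x y -> le y z -> le x z.
Hypothesis strong_supplementation : forall x y, ~ le x y ->
  exists z, le z x /\ ~ (exists u, le u z /\ le u y).
Hypothesis fusion : forall X : M -> Prop, (exists y, X y) ->
  exists x, (forall y, X y -> le y x) /\
    (forall a, le a x -> exists y z, X y /\ le z y /\ le z a).

Notation S := (sum_of le).

Lemma sum_of_pair (z w : M) : le w z -> S z (fun t => t = z \/ t = w).
Proof.
  intros Hwz. split.
  - intros y [-> | ->]; [apply le_refl | exact Hwz].
  - intros a Ha. exists z. split; [left; reflexivity |].
    exists a. split; [apply le_refl | exact Ha].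
Qed.

Lemma sle_sum_of_iff (y x : M) : sle S y x <-> le y x.
Proof.
  split.
  - intros [X [[Hupper _] Xy]]. exact (Hupper y Xy).
  - intros Hyx. exists (fun t => t = x \/ t = y).
    split; [apply sum_of_pair; exact Hyx | right; reflexivity].
Qed.

Lemma s_overlaps_overlap (a b : M) : s_overlaps S a b -> overlap le a b.
Proof.
  intros [X [Y [[HX _] [[HY _] [z [Xz Yz]]]]]].
  exists z. split; [exact (HX z Xz) | exact (HY z Yz)].
Qed.

(* A sum of X is below every upper bound of X: otherwise (P4) yields a part
   of the sum disjoint from the bound, yet that part overlaps a member of X. *)
Lemma sum_of_least (x b : M) (X : M -> Prop) :
  S x X -> (forall y, X y -> le y b) -> le x b.
Proof.
  intros [_ Hcover] Hbound. apply NNPP; intros Hxb.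
  destruct (strong_supplementation _ _ Hxb) as [z [Hzx Hdisjoint]].
  destruct (Hcover z Hzx) as [w [Xw [u [Huz Huw]]]].
  apply Hdisjoint. exists u.
  split; [exact Huz | exact (le_trans _ _ _ Huw (Hbound w Xw))].
Qed.

Lemma sum_of_exists (X : M -> Prop) : (exists y, X y) -> exists x, S x X.
Proof.
  intros Hne. destruct (fusion _ Hne) as [x [Hupper Hcover]].
  exists x. split; [exact Hupper |].
  intros a Ha. destruct (Hcover a Ha) as [y [z [Xy [Hzy Hza]]]].
  exists y. split; [exact Xy |]. exists z. split; assumption.
Qed.

Lemma sum_of_unique (x y : M) (X : M -> Prop) : S x X -> S y X -> x = y.
Proof.
  intros Hx Hy. apply le_antisym.
  - apply (sum_of_least _ _ _ Hx). apply Hy.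
  - apply (sum_of_least _ _ _ Hy). apply Hx.
Qed.

Lemma sum_of_union (x y : M) (X Y : M -> Prop) :
  S x X -> S y Y -> Y x -> S y (fun z => X z \/ Y z).
Proof.
  intros [HXx _] [HYy HcoverY] Yx. split.
  - intros z [Xz | Yz].
    + exact (le_trans _ _ _ (HXx z Xz) (HYy x Yx)).
    + exact (HYy z Yz).
  - intros a Ha. destruct (HcoverY a Ha) as [t [Yt Hat]].
    exists t. split; [right |]; assumption.
Qed.

(* (S4): a member y of one summing family of x overlaps some member z of any
   other; the families {z, w} and {y, w} for a common part w witness this. *)
Lemma sum_of_common_summand (x y : M) (X Y : M -> Prop) :
  S x X -> S x Y -> Y y ->
  exists z Z U, X z /\ S z Z /\ S y U /\ exists w, Z w /\ U w.
Proof.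
  intros [_ HcoverX] [HYx _] Yy.
  destruct (HcoverX y (HYx y Yy)) as [z [Xz [w [Hwy Hwz]]]].
  exists z, (fun t => t = z \/ t = w), (fun t => t = y \/ t = w).
  split; [exact Xz | split; [| split; [| exists w; split; right; reflexivity]]];
    apply sum_of_pair; assumption.
Qed.

(* (S5): if X is pre-dense below x, x sums the parts of x lying below a
   member of X; a common part of a part of x and of such a member is one. *)
Lemma sum_of_pre_dense (x : M) (X : M -> Prop) :
  pre_dense S X (Iset S x) -> S x (fun z => Iset S x z /\ IsetU S X z).
Proof.
  intros Hdense. split.
  - intros z [Hzx _]. apply sle_sum_of_iff, Hzx.
  - intros a Hax.
    destruct (Hdense a (proj2 (sle_sum_of_iff a x) Hax)) as [b [Xb Hsov]].
    destruct (s_overlaps_overlap _ _ Hsov) as [w [Hwb Hwa]].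
    exists w. split.
    + split.
      * apply sle_sum_of_iff. exact (le_trans _ _ _ Hwa Hax).
      * exists b. split; [exact Xb | apply sle_sum_of_iff, Hwb].
    + exists w. split; [exact Hwa | apply le_refl].
Qed.

End InducedSums.

Theorem theorem4p1 (M : Type) (le : M -> M -> Prop) :
  mereological le -> sum_structure (sum_of le).
Proof.
  intros [_ [refl [antisym [trans [supplementation fusion]]]]].
  split; [| split; [| split; [| split]]].
  - exact (sum_of_exists _ _ fusion).
  - exact (sum_of_unique _ _ antisym trans supplementation).
  - exact (sum_of_union _ _ trans).
  - exact (sum_of_common_summand _ _ refl).
  - exact (sum_of_pre_dense _ _ refl trans).
Qed.
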